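(* Let $\kappa=(a,b,c,d)\in[-2,2]^4$, $\rho\in\mathcal H_\kappa$, and $(x,y,z)=(\operatorname{tr}\rho(AB),\operatorname{tr}\rho(BC),\operatorname{tr}\rho(CA))$. If $\rho$ is a $\mathrm{Pin}(2)$-representation but not a $\mathrm{Spin}(2)$-representation, then one of the following holds: (1) $\kappa=(0,0,0,0)$; (2) one of the following six conditions holds: $a=b=0$ and $y=z=0$; $c=d=0$ and $y=z=0$; $a=c=0$ and $x=y=0$; $b=d=0$ and $x=y=0$; $a=d=0$ and $x=z=0$; $b=c=0$ and $x=z=0$. Conversely, if $\rho\in\mathcal H_\kappa$ satisfies (1) or (2), then $\rho$ is a $\mathrm{Pin}(2)$-representation.
   Context: $M$ is a four-holed sphere with $\pi_1(M)=\langle A,B,C,D : ABCD=I\rangle$, $A,B,C,D$ the boundary classes. For $\kappa=(a,b,c,d)\in[-2,2]^4$, $\mathcal H_\kappa$ is the set of homomorphisms $\rho:\pi_1(M)\to\mathrm{SU}(2)$ with $\operatorname{tr}\rho(A)=a$, $\operatorname{tr}\rho(B)=b$, $\operatorname{tr}\rho(C)=c$, $\operatorname{tr}\rho(D)=d$. Let $p:\mathrm{SU}(2)\to\mathrm{SO}(3)$ be the double cover; $\mathrm{Pin}(2)=p^{-1}(\mathrm{O}(2))$, which has two components $\mathrm{Spin}(2)\cup\mathrm{Spin}_-(2)$, where $\mathrm{Spin}(2)$ is the identity component, the circle $\{e^{i\theta}\}$ with $e^{i\theta}=\begin{pmatrix}\cos\theta&\sin\theta\\-\sin\theta&\cos\theta\end{pmatrix}$,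 and $\mathrm{Spin}_-(2)$ is the other component (e.g. containing $\iota=\begin{pmatrix}i&0\\0&-i\end{pmatrix}$); all elements of $\mathrm{Spin}_-(2)$ have trace $0$. For a subgroup $G\subset\mathrm{SU}(2)$, $\rho$ is called a $G$-representation if some $\mathrm{SU}(2)$-conjugate of $\rho$ has image contained in $G$. *)

From HB Require Import structures.
From mathcomp Require Import all_boot all_order all_algebra.
From mathcomp Require Import reals trigo.
From mathcomp.real_closed Require Import complex.
Set Implicit Arguments. Unset Strict Implicit. Unset Printing Implicit Defensive.
Import Order.TTheory GRing.Theory Num.Theory.
Local Open Scope ring_scope.
Local Open Scope complex_scope.

Section Defs.
Variable R : realType.
Notation C := (complex R).
Notation mat := ('M[C]_2).

Definition adjmx (U : mat) : mat := \matrix_(i, j) (U j i)^*.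

Definition SU2 (U : mat) : Prop := U *m adjmx U = 1%:M /\ \det U = 1.

Definition cR (r : R) : C := r%:C.

(* Spin(2) = { e^{i theta} } with e^{i theta} = [[cos, sin], [-sin, cos]] *)
Definition e_i (t : R) : mat :=
  \matrix_(i < 2, j < 2)
    (if i == j then cR (cos t) else if (i == 0) then cR (sin t) else cR (- sin t)).

Definition Spin2 (U : mat) : Prop := exists t : R, U = e_i t.

Definition iota : mat :=
  \matrix_(i < 2, j < 2) (if i == j then (if i == 0 then 'i else - 'i) else 0).

(* Spin_-(2) = the non-identity component of Pin(2) = iota * Spin(2) *)
Definition Spin2_minus (U : mat) : Prop := exists t : R, U = iota *m e_i t.

Definition Pin2 (U : mat) : Prop := Spin2 U \/ Spin2_minus U.

(* A homomorphism pi_1(M) -> SU(2) is given by the images (rA,rB,rC,rD) of the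
   generators, all in SU(2), with rA rB rC rD = I. *)
Definition hom4 (rA rB rC rD : mat) : Prop :=
  [/\ SU2 rA, SU2 rB, SU2 rC, SU2 rD & rA *m rB *m rC *m rD = 1%:M].

(* rho is a G-representation: some SU(2)-conjugate of rho has image in G.
   Since G is a subgroup, it suffices that the generators land in G. *)
Definition G_rep (G : mat -> Prop) (rA rB rC rD : mat) : Prop :=
  exists g : mat, SU2 g /\
    [/\ G (invmx g *m rA *m g), G (invmx g *m rB *m g),
        G (invmx g *m rC *m g) & G (invmx g *m rD *m g)].

End Defs.

From Pilot Require Import Defs.
From HB Require Import structures.
From mathcomp Require Import all_boot all_order all_algebra.
From mathcomp Require Import reals trigo.
From mathcomp.real_closed Require Import complex.
From mathcomp Require Import ring lra.
Import Order.TTheory GRing.Theory Num.Theory.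
Set Implicit Arguments. Unset Strict Implicit. Unset Printing Implicit Defensive.
Local Open Scope ring_scope.
Local Open Scope complex_scope.

(* SU(2) is the group of unit quaternions; Spin(2) consists of the p + r j and
   Spin_-(2) of the q i + s k.  So Pin(2) is Z/2-graded, multiplicatively, and
   its odd elements are traceless.  If a conjugate of rho lands in Pin(2), the
   relation ABCD = 1 makes the number of odd generators even; all four odd is
   (1), exactly two odd are the six cases of (2) (the odd generators and the
   products of an odd and an even one are traceless), and all four even means
   rho is a Spin(2)-representation.
   Conversely, rho is a Pin(2)-representation as soon as some nonzero pure
   quaternion w commutes or anticommutes with all generators: conjugating w to
   j does it.  Under (1) the generators are pure, and tr(ABC) = tr(D^-1) = 0
   says that their vector parts are coplanar; take w normal to them.  Under
   (2), say a = b = y = z = 0, the vector part of C is orthogonal to the pure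
   A and B: take w to be it, or a common normal of A and B if C is real. *)

Lemma common_normal (F : realFieldType) (a1 a2 a3 b1 b2 b3 c1 c2 c3 : F) :
  a1 * (b2 * c3 - b3 * c2) + a2 * (b3 * c1 - b1 * c3) + a3 * (b1 * c2 - b2 * c1) = 0 ->
  exists w1 w2 w3 : F,
  [/\ 0 < w1 ^+ 2 + w2 ^+ 2 + w3 ^+ 2, w1 * a1 + w2 * a2 + w3 * a3 = 0,
      w1 * b1 + w2 * b2 + w3 * b3 = 0 & w1 * c1 + w2 * c2 + w3 * c3 = 0].
Proof.
move=> det0.
(* The columns of M are a, b and c. *)
pose M : 'M[F]_3 := \matrix_(i, j)
  nth 0 (nth [::] [:: [:: a1; b1; c1]; [:: a2; b2; c2]; [:: a3; b3; c3]] i) j.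
have /det0P [v nz_v vM] : \det M == 0.
  rewrite (expand_det_row _ 0) !big_ord_recl big_ord0 /cofactor.
  rewrite !(expand_det_row _ 0) !big_ord_recl !big_ord0 /cofactor !det_mx11 !mxE /=.
  by apply/eqP; rewrite /bump /= -[X in _ = X]det0; ring.
have vM_dot j : v 0 0 * M 0 j + v 0 1 * M 1 j + v 0 2 * M 2 j = 0.
  transitivity ((v *m M) 0 j); last by rewrite vM mxE.
  rewrite [RHS]mxE !big_ord_recl big_ord0 addr0 addrA.
  by congr (v 0 _ * M _ j + v 0 _ * M _ j + v 0 _ * M _ j); apply: val_inj.
suff v_pos : 0 < v 0 0 ^+ 2 + v 0 1 ^+ 2 + v 0 2 ^+ 2.
  by exists (v 0 0), (v 0 1), (v 0 2); split => //;
    [have := vM_dot 0 | have := vM_dot 1 | have := vM_dot 2]; rewrite !mxE.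
have [j nz_vj] : exists j, v 0 j != 0.
  apply/existsP; apply: contraNT nz_v => /existsPn vj0.
  by apply/eqP/rowP => j; rewrite mxE; apply/eqP/negPn.
have := sqr_ge0 (v 0 0); have := sqr_ge0 (v 0 1); have := sqr_ge0 (v 0 2).
have : 0 < v 0 j ^+ 2 by rewrite exprn_even_gt0.
have [->|[->|->]] : j = 0 \/ j = 1 \/ j = 2.
  by case: j {nz_vj} => [[|[|[|//]]] ?]; [left|right; left|right; right]; apply: val_inj.
all: move=> *; lra.
Qed.

Section Quaternions.
Variable R : realType.
Notation C := (complex R).
Notation mat := ('M[C]_2).

Lemma eq_mx2 (A B : mat) : A 0 0 = B 0 0 -> A 0 1 = B 0 1 ->
  A 1 0 = B 1 0 -> A 1 1 = B 1 1 -> A = B.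
Proof.
move=> e00 e01 e10 e11; apply/matrixP => i j.
have ord2 (k : 'I_2) : k = 0 \/ k = 1.
  by case: k => [[|[|//]] ?]; [left | right]; apply: val_inj.
by case: (ord2 i) => ->; case: (ord2 j) => ->.
Qed.

Lemma mulmx2E (A B : mat) i j : (A *m B) i j = A i 0 * B 0 j + A i 1 * B 1 j.
Proof.
rewrite mxE !big_ord_recl big_ord0 addr0.
by congr (_ + A i _ * B _ j); apply: val_inj.
Qed.

Lemma det_mx2 (A : mat) : \det A = A 0 0 * A 1 1 - A 0 1 * A 1 0.
Proof.
rewrite (expand_det_row _ 0) /cofactor !big_ord_recl big_ord0 !det_mx11 !mxE.
rewrite /= expr0 expr1 addr0 mul1r mulN1r mulrN.
by congr (A _ _ * A _ _ - A _ _ * A _ _); apply: val_inj.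
Qed.

(* The quaternion [p + q i + r j + s k]. *)
Definition quat (p q r s : R) : mat :=
  \matrix_(i < 2, j < 2)
   (if i == 0 then (if j == 0 then p +i* q else r +i* s)
    else (if j == 0 then (- r) +i* s else p +i* (- q))).

Lemma quat_inj p q r s p' q' r' s' : quat p q r s = quat p' q' r' s' ->
  [/\ p = p', q = q', r = r' & s = s'].
Proof.
move=> E; have := congr1 (fun M : mat => M 0 0) E.
have := congr1 (fun M : mat => M 0 1) E.
by rewrite !mxE /= => -[-> ->] [-> ->].
Qed.

Lemma quat1 : quat 1 0 0 0 = 1%:M.
Proof. by apply: eq_mx2; rewrite !mxE /= ?oppr0. Qed.

Lemma mulmx_quat p1 q1 r1 s1 p2 q2 r2 s2 :
  quat p1 q1 r1 s1 *m quat p2 q2 r2 s2 =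
  quat (p1 * p2 - q1 * q2 - r1 * r2 - s1 * s2)
       (p1 * q2 + q1 * p2 + r1 * s2 - s1 * r2)
       (p1 * r2 - q1 * s2 + r1 * p2 + s1 * q2)
       (p1 * s2 + q1 * r2 - r1 * q2 + s1 * p2).
Proof.
by apply: eq_mx2; rewrite !mulmx2E !mxE /=; apply/eqP;
  rewrite eq_complex /=; apply/andP; split; apply/eqP; ring.
Qed.

Lemma oppmx_quat p q r s : - quat p q r s = quat (- p) (- q) (- r) (- s).
Proof.
by apply: eq_mx2; rewrite !mxE /=; apply/eqP;
  rewrite eq_complex /=; apply/andP; split; apply/eqP; ring.
Qed.

Lemma scalar_mulmx_quat (k p q r s : R) :
  (k%:C)%:M *m quat p q r s = quat (k * p) (k * q) (k * r) (k * s).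
Proof.
by apply: eq_mx2; rewrite !mulmx2E !mxE /=; apply/eqP;
  rewrite eq_complex /=; apply/andP; split; apply/eqP; ring.
Qed.

Lemma adjmx_quat p q r s : adjmx (quat p q r s) = quat p (- q) (- r) (- s).
Proof.
by apply: eq_mx2; rewrite !mxE /=; apply/eqP;
  rewrite eq_complex /=; apply/andP; split; apply/eqP; ring.
Qed.

Lemma mxtrace_quat p q r s : \tr (quat p q r s) = (p *+ 2)%:C.
Proof.
rewrite /mxtrace !big_ord_recl big_ord0 !mxE /=.
by apply/eqP; rewrite eq_complex /=; apply/andP; split; apply/eqP; ring.
Qed.

Lemma det_quat p q r s :
  \det (quat p q r s) = (p ^+ 2 + q ^+ 2 + r ^+ 2 + s ^+ 2)%:C.
Proof.
rewrite det_mx2 !mxE /=.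
by apply/eqP; rewrite eq_complex /=; apply/andP; split; apply/eqP; ring.
Qed.

Lemma SU2_quat p q r s :
  p ^+ 2 + q ^+ 2 + r ^+ 2 + s ^+ 2 = 1 -> SU2 (quat p q r s).
Proof.
move=> N; split; last by rewrite det_quat N.
by rewrite adjmx_quat mulmx_quat -quat1; congr quat; rewrite -?N; ring.
Qed.

Lemma SU2_quatP (M : mat) : SU2 M -> exists p q r s,
  M = quat p q r s /\ p ^+ 2 + q ^+ 2 + r ^+ 2 + s ^+ 2 = 1.
Proof.
move=> [MM' detM]; have M'M := mulmx1C MM'.
have e00 := congr1 (fun N : mat => N 0 0) M'M.
have e01 := congr1 (fun N : mat => N 0 1) M'M.
have e10 := congr1 (fun N : mat => N 1 0) M'M.
have e11 := congr1 (fun N : mat => N 1 1) M'M.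
rewrite !mulmx2E !mxE /= ?mulr1n ?mulr0n in e00 e01 e10 e11.
rewrite det_mx2 in detM.
move: e00 e01 e10 e11 detM.
set al := M 0 0; set be := M 0 1; set ga := M 1 0; set de := M 1 1.
move=> e00 e01 e10 e11 detM.
(* Cramer's rule for the unitary M: its second row is (- be^*, al^* ). *)
have Ede : de = al^*%C.
  have -> : al^*%C = al^*%C * (al * de - be * ga) by rewrite detM mulr1.
  have -> : al^*%C * (al * de - be * ga) = al^*%C * al * de - al^*%C * be * ga.
    by ring.
  have -> : al^*%C * al = 1 - ga^*%C * ga by rewrite -e00; ring.
  have -> : al^*%C * be = - (ga^*%C * de) by rewrite -[RHS]add0r -e01; ring.
  by ring.
have Ega : ga = - be^*%C.
  have -> : - be^*%C = - be^*%C * (al * de - be * ga) by rewrite detM mulr1.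
  have -> : - be^*%C * (al * de - be * ga) = - (be^*%C * al) * de + be^*%C * be * ga.
    by ring.
  have -> : be^*%C * be = 1 - de^*%C * de by rewrite -e11; ring.
  have -> : be^*%C * al = - (de^*%C * ga) by rewrite -[RHS]add0r -e10; ring.
  by ring.
exists (complex.Re al), (complex.Im al), (complex.Re be), (complex.Im be); split.
  apply: eq_mx2; rewrite !mxE /= -/al -/be -/ga -/de ?Ede ?Ega.
  - by case: (al).
  - by case: (be).
  - by case: (be) => u v /=; apply/eqP; rewrite eq_complex /= opprK !eqxx.
  - by case: (al).
move: detM; rewrite Ede Ega; case: (al) => u v; case: (be) => u' v'.
by move/(congr1 (@complex.Re R)) => /= <-; ring.
Qed.

Lemma SU2_unitmx (g : mat) : SU2 g -> g \in unitmx.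
Proof. by case=> _ detg; rewrite unitmxE detg unitr1. Qed.

Lemma SU2_invmx (g : mat) : SU2 g -> invmx g = adjmx g.
Proof.
move=> Ug; have [gg' _] := Ug.
by rewrite -[RHS]mul1mx -(mulVmx (SU2_unitmx Ug)) -mulmxA gg' mulmx1.
Qed.

Lemma SU2_adjmx (g : mat) : SU2 g -> SU2 (adjmx g).
Proof.
case/SU2_quatP=> p [q [r [s [-> N]]]]; rewrite adjmx_quat.
by apply: SU2_quat; rewrite -N; ring.
Qed.

Lemma SU2_mulmx (X Y : mat) : SU2 X -> SU2 Y -> SU2 (X *m Y).
Proof.
case/SU2_quatP=> [x0 [x1 [x2 [x3 [-> Nx]]]]].
case/SU2_quatP=> [y0 [y1 [y2 [y3 [-> Ny]]]]].
by rewrite mulmx_quat; apply: SU2_quat; rewrite -[1]mulr1 -{1}Nx -Ny; ring.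
Qed.

Definition mxconj (g X : mat) : mat := invmx g *m X *m g.

Lemma mxconjM (g X Y : mat) : g \in unitmx ->
  mxconj g X *m mxconj g Y = mxconj g (X *m Y).
Proof.
by move=> gu; rewrite /mxconj !mulmxA -[_ *m g *m invmx g]mulmxA mulmxV ?mulmx1.
Qed.

Lemma mxconj1 (g : mat) : g \in unitmx -> mxconj g 1%:M = 1%:M.
Proof. by move=> gu; rewrite /mxconj mulmx1 mulVmx. Qed.

Lemma mxtrace_conj (g X : mat) : g \in unitmx -> \tr (mxconj g X) = \tr X.
Proof. by move=> gu; rewrite /mxconj mxtrace_mulC mulmxA mulmxV ?mul1mx. Qed.

Lemma SU2_conj (g X : mat) : SU2 g -> SU2 X -> SU2 (mxconj g X).
Proof.
move=> Ug UX; rewrite /mxconj SU2_invmx //.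
by do 2?apply: SU2_mulmx => //; apply: SU2_adjmx.
Qed.

Lemma mxtrace_SU2_inv (X Y : mat) : SU2 X -> X *m Y = 1%:M -> \tr Y = \tr X.
Proof.
move=> UX XY; have -> : Y = invmx X.
  by rewrite -[Y]mul1mx -(mulVmx (SU2_unitmx UX)) -mulmxA XY mulmx1.
case/SU2_quatP: UX => p [q [r [s [-> N]]]].
by rewrite (SU2_invmx (SU2_quat N)) adjmx_quat !mxtrace_quat.
Qed.

Lemma cos_sin_onto (p r : R) : p ^+ 2 + r ^+ 2 = 1 ->
  exists t : R, cos t = p /\ sin t = r.
Proof.
move=> N; have p_bnd : -1 <= p <= 1 by apply/andP; split; nra.
have cos_p : cos (acos p) = p by apply: acosK; rewrite in_itv /=.
have sin_p : sin (acos p) = `|r|.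
  by rewrite sin_acos // (_ : 1 - p ^+ 2 = r ^+ 2) ?sqrtr_sqr // -N; ring.
have [r_ge0 | r_lt0] := leP 0 r.
  by exists (acos p); rewrite cos_p sin_p ger0_norm.
by exists (- acos p); rewrite cosN sinN cos_p sin_p ltr0_norm // opprK.
Qed.

Lemma e_i_quat t : e_i t = quat (cos t) 0 (sin t) 0.
Proof.
by apply: eq_mx2; rewrite !mxE /= /cR; apply/eqP; rewrite eq_complex /= ?oppr0 !eqxx.
Qed.

Lemma iota_e_i_quat t : Defs.iota R *m e_i t = quat 0 (cos t) 0 (sin t).
Proof.
by apply: eq_mx2; rewrite !mulmx2E !mxE /= /cR; apply/eqP;
  rewrite eq_complex /=; apply/andP; split; apply/eqP; ring.
Qed.

Lemma Spin2_quatP (M : mat) :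
  Spin2 M <-> exists p r, M = quat p 0 r 0 /\ p ^+ 2 + r ^+ 2 = 1.
Proof.
split=> [[t ->] | [p [r [-> /cos_sin_onto [t [<- <-]]]]]].
  by exists (cos t), (sin t); rewrite e_i_quat cos2Dsin2.
by exists t; rewrite e_i_quat.
Qed.

Lemma Spin2_minus_quatP (M : mat) :
  Spin2_minus M <-> exists q s, M = quat 0 q 0 s /\ q ^+ 2 + s ^+ 2 = 1.
Proof.
split=> [[t ->] | [q [s [-> /cos_sin_onto [t [<- <-]]]]]].
  by exists (cos t), (sin t); rewrite iota_e_i_quat cos2Dsin2.
by exists t; rewrite iota_e_i_quat.
Qed.

End Quaternions.

Section Grading.
Variable R : realType.
Notation C := (complex R).
Notation mat := ('M[C]_2).

(* [graded b M]: M lies in the real span of Spin(2) (b = false) or of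
   Spin_-(2) (b = true). *)
Definition graded (b : bool) (M : mat) : Prop :=
  if b then exists q s, M = quat 0 q 0 s else exists p r, M = quat p 0 r 0.

Lemma graded_mul b c (M N : mat) :
  graded b M -> graded c N -> graded (b (+) c) (M *m N).
Proof.
case: b; case: c => -[x [y ->]] [u [v ->]]; rewrite mulmx_quat.
- by exists (- (x * u) - y * v), (y * u - x * v); congr quat; ring.
- by exists (x * u - y * v), (x * v + y * u); congr quat; ring.
- by exists (x * u + y * v), (x * v - y * u); congr quat; ring.
- by exists (x * u - y * v), (x * v + y * u); congr quat; ring.
Qed.

Lemma graded1 b : graded b 1%:M -> b = false.
Proof.
by case: b => // -[q [s]]; rewrite -quat1 => /quat_inj [/eqP]; rewrite oner_eq0.
Qed.

Lemma mxtrace_graded_odd (M : mat) : graded true M -> \tr M = 0.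
Proof. by case=> q [s ->]; rewrite mxtrace_quat mul0rn. Qed.

Lemma Pin2_graded (M : mat) : Pin2 M -> exists b, graded b M.
Proof.
case=> [/Spin2_quatP | /Spin2_minus_quatP] [u [v [-> _]]].
  by exists false, u, v.
by exists true, u, v.
Qed.

Lemma Pin2_graded_even (M : mat) : Pin2 M -> graded false M -> Spin2 M.
Proof.
case=> // /Spin2_minus_quatP [q [s [-> N]]] [p [r /quat_inj [_ q0 _ s0]]].
by move: N; rewrite q0 s0 expr0n /= addr0 => /eqP; rewrite eq_sym oner_eq0.
Qed.

Definition trace_condition (a b c d : R) (x y z : C) : Prop :=
  [/\ a = 0, b = 0, c = 0 & d = 0] \/
  ([/\ a = 0, b = 0, y = 0 & z = 0]
    \/ [/\ c = 0, d = 0, y = 0 & z = 0]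
    \/ [/\ a = 0, c = 0, x = 0 & y = 0]
    \/ [/\ b = 0, d = 0, x = 0 & y = 0]
    \/ [/\ a = 0, d = 0, x = 0 & z = 0]
    \/ [/\ b = 0, c = 0, x = 0 & z = 0]).

Lemma Pin2_rep_trace_condition (a b c d : R) (rA rB rC rD : mat) :
  hom4 rA rB rC rD ->
  \tr rA = a%:C -> \tr rB = b%:C -> \tr rC = c%:C -> \tr rD = d%:C ->
  G_rep (@Pin2 R) rA rB rC rD -> ~ G_rep (@Spin2 R) rA rB rC rD ->
  trace_condition a b c d (\tr (rA *m rB)) (\tr (rB *m rC)) (\tr (rC *m rA)).
Proof.
move=> [_ _ _ _ ABCD] tA tB tC tD [g [Ug [pA pB pC pD]]] not_Spin2.
have gu := SU2_unitmx Ug.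
have [[oA eA] [oB eB]] := (Pin2_graded pA, Pin2_graded pB).
have [[oC eC] [oD eD]] := (Pin2_graded pC, Pin2_graded pD).
have even : oA (+) oB (+) oC (+) oD = false.
  apply: graded1; rewrite -(mxconj1 gu) -ABCD -!(mxconjM _ _ gu).
  by apply: graded_mul eD; apply: graded_mul eC; apply: graded_mul.
have odd_tr0 X o : graded o (mxconj g X) -> o -> \tr X = 0.
  by case: o => // /mxtrace_graded_odd; rewrite mxtrace_conj.
have odd_tr0M X Y o o' : graded o (mxconj g X) -> graded o' (mxconj g Y) ->
    o (+) o' -> \tr (X *m Y) = 0.
  by move=> eX eY; apply: odd_tr0; rewrite -(mxconjM _ _ gu); apply: graded_mul.
have odd_re0 k X o : \tr X = k%:C -> graded o (mxconj g X) -> o -> k = 0.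
  by move=> tX eX /(odd_tr0 _ _ eX); rewrite tX => /complexI.
have := odd_re0 _ _ _ tA eA; have := odd_re0 _ _ _ tB eB.
have := odd_re0 _ _ _ tC eC; have := odd_re0 _ _ _ tD eD.
have := odd_tr0M _ _ _ _ eA eB; have := odd_tr0M _ _ _ _ eB eC.
have := odd_tr0M _ _ _ _ eC eA.
rewrite /trace_condition.
(* The grading of the generators is even, hence has 4, 2 or 0 odd terms. *)
case: oA oB oC oD eA eB eC eD even => [] [] [] [] eA eB eC eD //= _ z0 y0 x0 d0 c0 b0 a0.
- by left; split; auto.
all: try by right; do ?[by left; split; auto | right]; split; auto.
by case: not_Spin2; exists g; split=> //; split; apply: Pin2_graded_even.
Qed.

End Grading.

Section Axis.
Variable R : realType.
Notation C := (complex R).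
Notation mat := ('M[C]_2).

Definition pm_commute (X W : mat) : Prop :=
  X *m W = W *m X \/ X *m W = - (W *m X).

Lemma pm_commute_mul (X Y W : mat) :
  pm_commute X W -> pm_commute Y W -> pm_commute (X *m Y) W.
Proof.
rewrite /pm_commute -!mulmxA => XW [-> | ->];
  by case: XW => XW; rewrite ?mulmxN !mulmxA XW ?mulNmx ?opprK; auto.
Qed.

Lemma pm_commute_rinv (X Y W : mat) :
  X *m Y = 1%:M -> pm_commute X W -> pm_commute Y W.
Proof.
move=> XY; have YX := mulmx1C XY; rewrite /pm_commute.
have -> : Y *m W = Y *m W *m (X *m Y) by rewrite XY mulmx1.
rewrite -!mulmxA [W *m (X *m Y)]mulmxA => -[<- | XW].
  by left; rewrite !mulmxA YX mul1mx.
by right; rewrite -[W *m X]opprK -XW mulNmx mulmxN !mulmxA YX mul1mx.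
Qed.

Lemma pm_commute_last (A B C D W : mat) : A *m B *m C *m D = 1%:M ->
  pm_commute A W -> pm_commute B W -> pm_commute C W -> pm_commute D W.
Proof.
move=> ABCD pA pB pC; apply: pm_commute_rinv ABCD _.
by apply: pm_commute_mul pC; apply: pm_commute_mul.
Qed.

Lemma mulmx4_rot (A B C D : mat) :
  A *m B *m C *m D = 1%:M -> B *m C *m D *m A = 1%:M.
Proof. by move=> ABCD; apply: mulmx1C; rewrite !mulmxA. Qed.

Lemma pm_commute_scale (X W : mat) (k : R) :
  k != 0 -> pm_commute X ((k%:C)%:M *m W) -> pm_commute X W.
Proof.
move=> k0; have kC0 : k%:C != 0 by apply: contra k0 => /eqP /complexI ->.
have kK (M : mat) : (k%:C^-1)%:M *m ((k%:C)%:M *m M) = M.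
  by rewrite mulmxA -scalar_mxM mulVf // mul1mx.
rewrite /pm_commute !mulmxA [X *m _]scalar_mxC -!mulmxA => -[XW | XW].
  by left; rewrite -[LHS]kK XW kK.
by right; rewrite -[LHS]kK XW mulmxN kK.
Qed.

Lemma pm_commute_parallel (x0 x1 x2 x3 w1 w2 w3 : R) :
  x2 * w3 = x3 * w2 -> x3 * w1 = x1 * w3 -> x1 * w2 = x2 * w1 ->
  pm_commute (quat x0 x1 x2 x3) (quat 0 w1 w2 w3).
Proof.
by move=> e1 e2 e3; left; rewrite !mulmx_quat; congr quat; nra.
Qed.

Lemma pm_commute_orthogonal (x1 x2 x3 w1 w2 w3 : R) :
  w1 * x1 + w2 * x2 + w3 * x3 = 0 ->
  pm_commute (quat 0 x1 x2 x3) (quat 0 w1 w2 w3).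
Proof.
by move=> wx; right; rewrite !mulmx_quat oppmx_quat; congr quat; nra.
Qed.

Definition quat_j : mat := quat 0 0 1 0.

Lemma Pin2_pm_commute_j (X : mat) : SU2 X -> pm_commute X quat_j -> Pin2 X.
Proof.
case/SU2_quatP=> [p [q [r [s [-> N]]]]].
rewrite /pm_commute /quat_j !mulmx_quat oppmx_quat => -[|] /quat_inj [e0 e1 e2 e3].
  by left; apply/Spin2_quatP; exists p, r; rewrite -N; split; [congr quat|]; nra.
by right; apply/Spin2_minus_quatP; exists q, s; rewrite -N; split; [congr quat|]; nra.
Qed.

Lemma pm_commute_conj (g U X : mat) : g \in unitmx -> U *m g = g *m quat_j ->
  pm_commute X U -> pm_commute (mxconj g X) quat_j.
Proof.
move=> gu Ug.
have gU : invmx g *m U = quat_j *m invmx g.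
  by rewrite -[LHS]mulmx1 -(mulmxV gu) mulmxA -(mulmxA _ U) Ug !mulmxA mulVmx ?mul1mx.
have XJ : mxconj g X *m quat_j = invmx g *m (X *m U) *m g.
  by rewrite /mxconj -!mulmxA -Ug.
have JX : quat_j *m mxconj g X = invmx g *m (U *m X) *m g.
  by rewrite /mxconj !mulmxA -gU.
by rewrite /pm_commute XJ JX => -[-> | ->]; [left | right; rewrite mulmxN mulNmx].
Qed.

Lemma conj_unit_pure_j (u1 u2 u3 : R) : u1 ^+ 2 + u2 ^+ 2 + u3 ^+ 2 = 1 ->
  exists2 g, SU2 g & quat 0 u1 u2 u3 *m g = g *m quat_j.
Proof.
(* [g] is [1 - u j], normalized; it vanishes only for u = -j, which [i]
   conjugates to [j]. *)
move=> N; have [u2N | u2N] := eqVneq u2 (-1).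
  have [-> ->] : u1 = 0 /\ u3 = 0 by split; nra.
  exists (quat 0 1 0 0); first by apply: SU2_quat; ring.
  by rewrite u2N /quat_j !mulmx_quat; congr quat; ring.
have n2_gt0 : 0 < 2 + 2 * u2.
  by rewrite lt_def; apply/andP; split; [apply: contra u2N => /eqP ?; apply/eqP|]; nra.
pose k := (Num.sqrt (2 + 2 * u2))^-1.
have k2 : k ^+ 2 * (2 + 2 * u2) = 1.
  by rewrite exprVn sqr_sqrtr ?mulVf ?gt_eqF // ltW.
exists (quat ((1 + u2) * k) (u3 * k) 0 (- u1 * k)).
  by apply: SU2_quat; have := congr1 (fun t => k ^+ 2 * t) N; rewrite mulr1; nra.
have := congr1 (fun t => k * t) N; rewrite mulr1 => kN.
by rewrite /quat_j !mulmx_quat; congr quat; nra.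
Qed.

Definition pure_axis (W : mat) : Prop :=
  exists w1 w2 w3, W = quat 0 w1 w2 w3 /\ 0 < w1 ^+ 2 + w2 ^+ 2 + w3 ^+ 2.

Lemma Pin2_rep_of_axis (rA rB rC rD W : mat) :
  SU2 rA -> SU2 rB -> SU2 rC -> SU2 rD -> pure_axis W ->
  pm_commute rA W -> pm_commute rB W -> pm_commute rC W -> pm_commute rD W ->
  G_rep (@Pin2 R) rA rB rC rD.
Proof.
move=> UA UB UC UD [w1 [w2 [w3 [-> w_gt0]]]].
pose m := Num.sqrt (w1 ^+ 2 + w2 ^+ 2 + w3 ^+ 2).
have m0 : m != 0 by rewrite gt_eqF // sqrtr_gt0.
have mK (w : R) : m * (m^-1 * w) = w by rewrite mulrA mulfV ?mul1r.
rewrite -[w1]mK -[w2]mK -[w3]mK -[0](mulr0 m) -scalar_mulmx_quat.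
move=> /(pm_commute_scale m0) pA /(pm_commute_scale m0) pB.
move=> /(pm_commute_scale m0) pC /(pm_commute_scale m0) pD.
have [|g Ug ug] := @conj_unit_pure_j (m^-1 * w1) (m^-1 * w2) (m^-1 * w3).
  by rewrite !exprMn -!mulrDr exprVn sqr_sqrtr ?mulVf ?gt_eqF // ltW.
have conj_Pin2 X :
    SU2 X -> pm_commute X (quat 0 (m^-1 * w1) (m^-1 * w2) (m^-1 * w3)) ->
    Pin2 (mxconj g X).
  move=> UX pX; apply: Pin2_pm_commute_j; first exact: SU2_conj.
  exact: pm_commute_conj (SU2_unitmx Ug) ug pX.
by exists g; split=> //; split; apply: conj_Pin2.
Qed.

Lemma SU2_pure (X : mat) : SU2 X -> \tr X = 0 -> exists q r s, X = quat 0 q r s.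
Proof.
case/SU2_quatP=> p [q [r [s [-> _]]]]; rewrite mxtrace_quat => /complexI /eqP.
by rewrite mulrn_eq0 /= => /eqP ->; exists q, r, s.
Qed.

Lemma mxtrace_mulmx_quat (x0 x1 x2 x3 y0 y1 y2 y3 : R) :
  \tr (quat x0 x1 x2 x3 *m quat y0 y1 y2 y3) =
  ((x0 * y0 - x1 * y1 - x2 * y2 - x3 * y3) *+ 2)%:C.
Proof. by rewrite mulmx_quat mxtrace_quat. Qed.

Lemma mxtrace_mulmx_pure3 (a1 a2 a3 b1 b2 b3 c1 c2 c3 : R) :
  \tr (quat 0 a1 a2 a3 *m quat 0 b1 b2 b3 *m quat 0 c1 c2 c3) =
  ((a1 * (b2 * c3 - b3 * c2) + a2 * (b3 * c1 - b1 * c3)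
    + a3 * (b1 * c2 - b2 * c1)) *- 2)%:C.
Proof.
rewrite !mulmx_quat mxtrace_quat; congr (_%:C).
by rewrite -mulNrn; congr (_ *+ 2); ring.
Qed.

Lemma pure_pair_axis (X Y Z : mat) : SU2 X -> SU2 Y -> SU2 Z ->
  \tr X = 0 -> \tr Y = 0 -> \tr (Z *m X) = 0 -> \tr (Z *m Y) = 0 ->
  exists2 W, pure_axis W & [/\ pm_commute X W, pm_commute Y W & pm_commute Z W].
Proof.
move=> UX UY /SU2_quatP [z0 [z1 [z2 [z3 [-> _]]]]].
move=> /(SU2_pure UX) [x1 [x2 [x3 ->]]] /(SU2_pure UY) [y1 [y2 [y3 ->]]].
rewrite !mxtrace_mulmx_quat => /complexI /eqP + /complexI /eqP.
rewrite !mulrn_eq0 /= !mulr0 !sub0r !subr_eq0 => /eqP zx /eqP zy.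
have [z_gt0 | z_le0] := ltP 0 (z1 ^+ 2 + z2 ^+ 2 + z3 ^+ 2).
  exists (quat 0 z1 z2 z3); first by exists z1, z2, z3.
  split; [apply: pm_commute_orthogonal | apply: pm_commute_orthogonal |
          apply: pm_commute_parallel]; nra.
have [-> -> ->] : [/\ z1 = 0, z2 = 0 & z3 = 0] by split; nra.
have [|w1 [w2 [w3 [w_gt0 wx wy _]]]] := @common_normal _ x1 x2 x3 y1 y2 y3 x1 x2 x3.
  by ring.
exists (quat 0 w1 w2 w3); first by exists w1, w2, w3.
by split; [apply: pm_commute_orthogonal | apply: pm_commute_orthogonal |
           apply: pm_commute_parallel]; rewrite ?mul0r.
Qed.

Lemma pure_triple_axis (A B C D : mat) :
  SU2 A -> SU2 B -> SU2 C -> SU2 D -> A *m B *m C *m D = 1%:M ->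
  \tr A = 0 -> \tr B = 0 -> \tr C = 0 -> \tr D = 0 ->
  exists2 W, pure_axis W & [/\ pm_commute A W, pm_commute B W & pm_commute C W].
Proof.
move=> UA UB UC UD ABCD trA trB trC trD.
have trABC : \tr (A *m B *m C) = 0.
  by rewrite -(mxtrace_SU2_inv _ ABCD) //; apply: SU2_mulmx UC; apply: SU2_mulmx.
move: trABC; have [a1 [a2 [a3 ->]]] := SU2_pure UA trA.
have [b1 [b2 [b3 ->]]] := SU2_pure UB trB; have [c1 [c2 [c3 ->]]] := SU2_pure UC trC.
rewrite mxtrace_mulmx_pure3 => /complexI /eqP; rewrite oppr_eq0 mulrn_eq0 /=.
move=> /eqP /common_normal [w1 [w2 [w3 [w_gt0 wa wb wc]]]].
exists (quat 0 w1 w2 w3); first by exists w1, w2, w3.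
by split; apply: pm_commute_orthogonal.
Qed.

Lemma trace_condition_Pin2_rep (a b c d : R) (rA rB rC rD : mat) :
  hom4 rA rB rC rD ->
  \tr rA = a%:C -> \tr rB = b%:C -> \tr rC = c%:C -> \tr rD = d%:C ->
  trace_condition a b c d (\tr (rA *m rB)) (\tr (rB *m rC)) (\tr (rC *m rA)) ->
  G_rep (@Pin2 R) rA rB rC rD.
Proof.
move=> [UA UB UC UD ABCD] tA tB tC tD.
have BCDA := mulmx4_rot ABCD; have CDAB := mulmx4_rot BCDA.
have DABC := mulmx4_rot CDAB.
have trDA : \tr (rD *m rA) = \tr (rB *m rC).
  by apply: mxtrace_SU2_inv (SU2_mulmx UB UC) _; rewrite !mulmxA.
have trCD : \tr (rC *m rD) = \tr (rA *m rB).
  by apply: mxtrace_SU2_inv (SU2_mulmx UA UB) _; rewrite !mulmxA.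
have Pin2_rep := Pin2_rep_of_axis UA UB UC UD.
case=> [[? ? ? ?] | [|[|[|[|[|]]]]] [? ? t1 t2]]; subst.
- have [W axW [pA pB pC]] := pure_triple_axis UA UB UC UD ABCD tA tB tC tD.
  exact: Pin2_rep axW pA pB pC (pm_commute_last ABCD pA pB pC).
- rewrite mxtrace_mulC in t1.
  have [W axW [pA pB pC]] := pure_pair_axis UA UB UC tA tB t2 t1.
  exact: Pin2_rep axW pA pB pC (pm_commute_last ABCD pA pB pC).
- rewrite -trDA mxtrace_mulC in t1; rewrite mxtrace_mulC in t2.
  have [W axW [pC pD pA]] := pure_pair_axis UC UD UA tC tD t2 t1.
  exact: Pin2_rep axW pA (pm_commute_last CDAB pC pD pA) pC pD.
- rewrite mxtrace_mulC in t1.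
  have [W axW [pA pC pB]] := pure_pair_axis UA UC UB tA tC t1 t2.
  exact: Pin2_rep axW pA pB pC (pm_commute_last ABCD pA pB pC).
- rewrite -trDA mxtrace_mulC in t2.
  have [W axW [pB pD pA]] := pure_pair_axis UB UD UA tB tD t1 t2.
  exact: Pin2_rep axW pA pB (pm_commute_last DABC pD pA pB) pD.
- rewrite -trCD in t1.
  have [W axW [pA pD pC]] := pure_pair_axis UA UD UC tA tD t2 t1.
  exact: Pin2_rep axW pA (pm_commute_last CDAB pC pD pA) pC pD.
- rewrite mxtrace_mulC in t2.
  have [W axW [pB pC pA]] := pure_pair_axis UB UC UA tB tC t1 t2.
  exact: Pin2_rep axW pA pB pC (pm_commute_last ABCD pA pB pC).
Qed.

End Axis.

Theorem proposition3p2 (R : realType) (a b c d : R)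
  (ha : -2 <= a <= 2) (hb : -2 <= b <= 2) (hc : -2 <= c <= 2) (hd : -2 <= d <= 2)
  (rA rB rC rD : 'M[complex R]_2)
  (hrho : hom4 rA rB rC rD)
  (trA : \tr rA = a%:C) (trB : \tr rB = b%:C)
  (trC : \tr rC = c%:C) (trD : \tr rD = d%:C) :
  let x := \tr (rA *m rB) in
  let y := \tr (rB *m rC) in
  let z := \tr (rC *m rA) in
  let cond1 := [/\ a = 0, b = 0, c = 0 & d = 0] in
  let cond2 :=
       [/\ a = 0, b = 0, y = 0 & z = 0]
    \/ [/\ c = 0, d = 0, y = 0 & z = 0]
    \/ [/\ a = 0, c = 0, x = 0 & y = 0]
    \/ [/\ b = 0, d = 0, x = 0 & y = 0]
    \/ [/\ a = 0, d = 0, x = 0 & z = 0]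
    \/ [/\ b = 0, c = 0, x = 0 & z = 0] in
  (G_rep (@Pin2 R) rA rB rC rD /\ ~ G_rep (@Spin2 R) rA rB rC rD ->
     cond1 \/ cond2)
  /\ (cond1 \/ cond2 -> G_rep (@Pin2 R) rA rB rC rD).
Proof.
cbv zeta; split.
- by case; exact: Pin2_rep_trace_condition hrho trA trB trC trD.
- exact: trace_condition_Pin2_rep hrho trA trB trC trD.
Qed.
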